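(* Let $e\geq 2$, $N$ cyclic of order $2^e$, $G$ any subgroup of $\mathrm{Hol}(N)$, $H$ any subgroup of $G$ of index $2^e$, and $C=\mathrm{Core}_G(H)$. If $|H\cap N|\geq 4$, then $G/C$ is not isomorphic to any transitive subgroup of $\mathrm{Hol}(N)$.
   Context: $\mathrm{Hol}(N)=N\rtimes\mathrm{Aut}(N)$ acts on $N$ by $(\eta,\alpha)\cdot x=\eta\,\alpha(x)$, with $N$ identified with a normal subgroup of it; a subgroup is transitive if it acts transitively on $N$. $\mathrm{Core}_G(H)$ is the largest normal subgroup of $G$ contained in $H$. *)

From mathcomp Require Import all_boot all_fingroup all_solvable.
Set Implicit Arguments. Unset Strict Implicit. Unset Printing Implicit Defensive.
Local Open Scope group_scope.

(* The group N is the whole finGroupType gT, i.e. N = [set: gT].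
   Hol(N) is realised as a permutation group on the points of N:
   it is generated by the left translations x |-> eta * x (eta in N)
   and the automorphisms Aut(N); the action is the natural one 'P,
   i.e. (eta, alpha) . x = eta * alpha(x). *)

Definition transl (gT : finGroupType) (b : gT) : {perm gT} := perm (mulgI b).

Definition HolN (gT : finGroupType) : {set {perm gT}} :=
  [set transl b | b : gT].

Definition Hol (gT : finGroupType) : {set {perm gT}} :=
  <<HolN gT :|: Aut [set: gT]>>.

Definition transitive_sub (gT : finGroupType) (T : {set {perm gT}}) : bool :=
  [transitive T, on [set: gT] | 'P].

From mathcomp Require Import all_boot all_fingroup all_solvable zify.

(* Every element of Hol(N) is an affine map x |-> b x^m with m odd, and its
   j-th power is x |-> b^(1 + m + ... + m^(j-1)) x^(m^j).  For e >= 3 and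
   j = 2^(e-2) we have m^j = 1 mod 2^e and 2^(e-2) divides the geometric sum,
   so g^j is a translation of order dividing 4 for every g in G.  Such
   translations lie in the unique subgroup of order 4 of N, hence in H and in
   all its conjugates: G / Core_G(H) has exponent dividing 2^(e-2).  A
   transitive T has no such bound: among the elements of T sending 1 to z, to
   z^2, or their product, one has multiplier 1 mod 4 and translation part of
   2-valuation at most 1, and its 2^(e-2)-th power moves 1.  For e = 2, H
   would contain N, so 16 would divide |G|, which divides 4! = 24. *)

Set Implicit Arguments. Unset Strict Implicit. Unset Printing Implicit Defensive.

Definition geosum (m j : nat) : nat := \sum_(i < j) m ^ i.

Lemma geosumSr m j : geosum m j.+1 = geosum m j + m ^ j.
Proof. by rewrite /geosum big_ord_recr. Qed.

Lemma geosum_double m j : geosum m (j + j) = geosum m j * (1 + m ^ j).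
Proof.
rewrite /geosum big_split_ord mulnDr muln1 big_distrl /=; congr (_ + _).
by apply: eq_bigr => i _; rewrite expnD mulnC.
Qed.

Lemma geosum_pow2S m j : geosum m (2 ^ j.+1) = geosum m (2 ^ j) * (1 + m ^ 2 ^ j).
Proof. by rewrite expnS mul2n -addnn geosum_double. Qed.

Lemma dvdn_geosum_pow2 m j : odd m -> 2 ^ j %| geosum m (2 ^ j).
Proof.
move=> odd_m; elim: j => [|j IHj]; first by rewrite dvd1n.
by rewrite geosum_pow2S expnS mulnC dvdn_mul // dvdn2 oddD oddX odd_m orbT.
Qed.

Lemma geosum_pow2_1mod4 m j :
  m %% 4 = 1 -> exists2 o, odd o & geosum m (2 ^ j) = 2 ^ j * o.
Proof.
move=> m1; elim: j => [|j [o odd_o IHj]]; first by exists 1; rewrite // /geosum big_ord1.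
rewrite geosum_pow2S IHj.
have [u ->]: exists u, m ^ 2 ^ j = 4 * u + 1.
  by exists (m ^ 2 ^ j %/ 4); rewrite {1}(divn_eq (m ^ 2 ^ j) 4) -modnXm m1 exp1n mulnC.
exists (o * (2 * u + 1)); first by rewrite oddM odd_o oddD oddM.
rewrite expnS; nia.
Qed.

Lemma odd_sqr_mod8 m : odd m -> m ^ 2 = 1 %[mod 8].
Proof.
move=> odd_m; rewrite -modnXm; have : m %% 8 < 8 by rewrite ltn_mod.
have : odd (m %% 8) by rewrite odd_mod.
by case: (m %% 8) => [|[|[|[|[|[|[|[|]]]]]]]].
Qed.

Lemma odd_expn_pow2_mod m j : odd m -> m ^ (2 ^ j.+1) = 1 %[mod 2 ^ j.+3].
Proof.
move=> odd_m; elim: j => [|j IHj]; first exact: odd_sqr_mod8.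
rewrite (expnS 2 j.+1) mulnC expnM.
have [q ->]: exists q, m ^ 2 ^ j.+1 = q * 2 ^ j.+3 + 1.
  exists (m ^ 2 ^ j.+1 %/ 2 ^ j.+3).
  by rewrite {1}(divn_eq (m ^ 2 ^ j.+1) (2 ^ j.+3)) IHj modn_small // (ltn_exp2l 0).
have ->: (q * 2 ^ j.+3 + 1) ^ 2 = (q + q ^ 2 * 2 ^ j.+2) * 2 ^ j.+4 + 1.
  by rewrite !expnS; nia.
by rewrite modnMDl.
Qed.

Local Open Scope group_scope.

Lemma expg_cardT (gT : finGroupType) (x : gT) : x ^+ #|gT| = 1.
Proof. by rewrite -cardsT expg_cardG ?inE. Qed.

Lemma exponent_quotient_gcore (gT : finGroupType) (G H : {group gT}) n :
  {in G, forall x, x ^+ n \in H} -> exponent (G / gcore H G) %| n.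
Proof.
move=> GnH; apply/exponentP => _ /morphimP[x Nx Gx ->].
rewrite -morphX //= coset_id //; apply/bigcapP => y Gy.
by rewrite mem_conjg conjXg GnH ?groupJ ?groupV.
Qed.

Lemma mem_cyclic_pgroup (gT : finGroupType) p (G K : {group gT}) n x :
  prime p -> cyclic G -> p.-group G -> K \subset G -> p ^ n <= #|K| ->
  x \in G -> x ^+ (p ^ n) = 1 -> x \in K.
Proof.
move=> p_pr cycG pG sKG leK Gx xn1.
rewrite -cycle_subG -(cardSg_cyclic cycG) ?cycle_subG //.
apply: dvdn_trans (_ : p ^ n %| _); first by rewrite order_dvdn xn1.
rewrite (card_pgroup (pgroupS sKG pG)) dvdn_exp2l //.
by rewrite -(leq_exp2l _ _ (prime_gt1 p_pr)) -card_pgroup // (pgroupS sKG pG).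
Qed.

Section Translations.

Variable gT : finGroupType.

Lemma translE (b x : gT) : transl b x = b * x.
Proof. by rewrite permE. Qed.

Lemma transl_inj : injective (@transl gT).
Proof. by move=> a b /(congr1 (fun p : {perm gT} => p 1)); rewrite !translE !mulg1. Qed.

Lemma translM (a b : gT) : transl a * transl b = transl (b * a).
Proof. by apply/permP => x; rewrite permM !translE mulgA. Qed.

Lemma transl1 : transl (1 : gT) = 1.
Proof. by apply/permP => x; rewrite translE perm1 mul1g. Qed.

Lemma HolN_group_set : group_set (HolN gT).
Proof.
apply/andP; split; first by apply/imsetP; exists 1; rewrite ?transl1.
apply/subsetP => _ /mulsgP[_ _ /imsetP[a _ ->] /imsetP[b _ ->] ->].
by rewrite translM imset_f.
Qed.
Canonical HolN_group := Group HolN_group_set.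

Lemma card_HolN : #|HolN gT| = #|gT|.
Proof. by rewrite card_imset //; exact: transl_inj. Qed.

Definition transl_pre (H : {set {perm gT}}) := [set c : gT | transl c \in H].

Lemma transl_pre_group_set (H : {group {perm gT}}) : group_set (transl_pre H).
Proof.
apply/andP; split; first by rewrite inE transl1 group1.
apply/subsetP => _ /mulsgP[a b Ha Hb ->].
by rewrite !inE in Ha Hb *; rewrite -translM groupM.
Qed.
Canonical transl_pre_group H := Group (transl_pre_group_set H).

Lemma card_transl_pre (H : {set {perm gT}}) : #|transl_pre H| = #|H :&: HolN gT|.
Proof.
rewrite -(card_imset _ transl_inj); apply: eq_card => p.
apply/imsetP/setIP => [[c Hc ->] | [Hp /imsetP[c _ pc]]].
  by rewrite inE in Hc; rewrite Hc imset_f.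
by exists c; rewrite // inE -pc.
Qed.

Lemma index_dvdn6 (G H : {group {perm gT}}) :
  #|gT| = 4 -> HolN gT \subset H -> H \subset G -> #|G : H| %| 6.
Proof.
move=> N4 sNH sHG.
have dvdG24 : #|G| %| 4`!.
  by rewrite -N4 -card_Sym cardSg ?subsetT.
have /dvdnP[k defH] : 4 %| #|H| by rewrite -N4 -card_HolN cardSg.
move: dvdG24; rewrite -(Lagrange sHG) defH mulnAC (_ : 4`! = 6 * 4)%N //.
by rewrite dvdn_pmul2r //; apply: dvdn_trans (dvdn_mull k (dvdnn _)).
Qed.

End Translations.

Section AffinePerms.

Variable gT : finGroupType.
Hypothesis Ncyc : cyclic [set: gT].

Lemma commuteN (x y : gT) : commute x y.
Proof. exact: centsP (cyclic_abelian Ncyc) x (in_setT x) y (in_setT y). Qed.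

Definition affine (p : {perm gT}) (b : gT) (m : nat) := forall x, p x = b * x ^+ m.

Definition affine_perms : {set {perm gT}} :=
  [set p : {perm gT} | [exists b, exists m : 'I_#|gT|, [forall x, p x == b * x ^+ m]]].

Lemma affine_permsP p : reflect (exists b m, affine p b m) (p \in affine_perms).
Proof.
apply: (iffP idP) => [|[b [m p_aff]]].
  by rewrite inE => /existsP[b /existsP[m /forallP p_aff]]; exists b, m => x; apply/eqP.
have ltm : m %% #|gT| < #|gT| by rewrite ltn_mod -cardsT cardG_gt0.
rewrite inE; apply/existsP; exists b; apply/existsP; exists (Ordinal ltm).
by apply/forallP => x /=; rewrite (expg_mod _ (expg_cardT x)) p_aff.
Qed.

Lemma affine1 p b m : affine p b m -> p 1 = b.
Proof. by move=> p_aff; rewrite p_aff expg1n mulg1. Qed.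

Lemma affine_mul p q b c m n : affine p b m -> affine q c n ->
  affine (p * q) (c * b ^+ n) (m * n).
Proof.
by move=> p_aff q_aff x; rewrite permM p_aff q_aff (expgMn _ (commuteN _ _)) expgM mulgA.
Qed.

Lemma affine_expn p b m j : affine p b m -> affine (p ^+ j) (b ^+ geosum m j) (m ^ j).
Proof.
move=> p_aff; elim: j => [|j IHj] x; first by rewrite perm1 /geosum big_ord0 mul1g.
rewrite expgS permM p_aff IHj (expgMn _ (commuteN _ _)) -!expgM mulgA -expgD.
by rewrite geosumSr expnS.
Qed.

Lemma affine_perms_group_set : group_set affine_perms.
Proof.
apply/andP; split; first by apply/affine_permsP; exists 1, 1%N => x; rewrite perm1 mul1g.
apply/subsetP => _ /mulsgP[p q /affine_permsP[b [m p_aff]] /affine_permsP[c [n q_aff]] ->].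
by apply/affine_permsP; exists (c * b ^+ n), (m * n)%N; apply: affine_mul.
Qed.
Canonical affine_perms_group := Group affine_perms_group_set.

Lemma Hol_affine p : p \in Hol gT -> exists b m, affine p b m.
Proof.
move=> Hol_p; apply/affine_permsP; move: p Hol_p; apply/subsetP; rewrite gen_subG.
apply/subsetP => p /setUP[/imsetP[b _ ->] | Ap].
  by apply/affine_permsP; exists b, 1%N => x; rewrite translE.
have [z genz] := cyclicP Ncyc.
have /cycleP[m pz] : p z \in <[z]> by rewrite -genz inE.
apply/affine_permsP; exists 1, m => x; have /cycleP[k ->] : x \in <[z]> by rewrite -genz inE.
by rewrite mul1g -(autmE Ap) morphX ?inE //= autmE pz -!expgM mulnC.
Qed.

Lemma affine_odd p b m : 2 %| #|gT| -> affine p b m -> odd m.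
Proof.
move=> evenN p_aff; apply: contraT => even_m.
have [y _ oy] : {y | y \in [set: gT] & #[y] = 2} by apply: Cauchy; rewrite ?cardsT.
have y_neq1 : y != 1 by rewrite -order_gt1 oy.
case/negP: y_neq1; apply/eqP/(@perm_inj _ p); rewrite (affine1 p_aff) p_aff.
have -> : y ^+ m = 1 by apply/eqP; rewrite -order_dvdn oy dvdn2.
by rewrite mulg1.
Qed.

Lemma affine_expn_transl p b m j : affine p b m -> m ^ j = 1 %[mod #|gT|] ->
  p ^+ j = transl (b ^+ geosum m j).
Proof.
move=> p_aff mj1; apply/permP => x; rewrite translE (affine_expn j p_aff).
congr (_ * _); apply/eqP; rewrite -{2}(expg1 x) eq_expg_mod_order.
have dvd_x : #[x] %| #|gT| by rewrite -cardsT order_dvdG ?inE.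
by rewrite -(modn_dvdm (m ^ j) dvd_x) mj1 modn_dvdm.
Qed.

End AffinePerms.

Section CyclicTwoGroup.

Variables (gT : finGroupType) (e : nat).
Hypotheses (Ncyc : cyclic [set: gT]) (Nord : #|gT| = (2 ^ e)%N) (e_ge2 : 2 <= e).

Lemma transl_mem (H : {group {perm gT}}) c :
  4 <= #|H :&: HolN gT| -> c ^+ 4 = 1 -> transl c \in H.
Proof.
rewrite -card_transl_pre => H4 c4.
have : c \in transl_pre H.
  apply: (@mem_cyclic_pgroup _ 2 [set: gT] _ 2) => //; rewrite ?subsetT ?inE //.
  by rewrite /pgroup cardsT Nord pnatX pnat_id.
by rewrite inE.
Qed.

Lemma affine_expn_neq1 (z : gT) p k m : #[z] = (2 ^ e)%N -> affine p (z ^+ k) m ->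
  (m %% 4 = 1)%N -> odd k || (k == 2) -> p ^+ (2 ^ (e - 2))%N != 1.
Proof.
move=> oz p_aff m1 k_odd_or_2; apply/eqP => /(congr1 (fun q : {perm gT} => q 1)).
rewrite perm1 (affine1 (affine_expn Ncyc _ p_aff)) -expgM => /eqP.
rewrite -order_dvdn oz; have [o odd_o ->] := geosum_pow2_1mod4 (e - 2) m1.
rewrite -{1}(subnK e_ge2) expnD mulnCA dvdn_pmul2l ?expn_gt0 //.
have := oddM k o; rewrite odd_o andbT; case/orP: k_odd_or_2 => [|/eqP->]; lia.
Qed.

Let evenN : 2 %| #|gT|.
Proof. by rewrite Nord dvdn_exp // ltnW. Qed.

Lemma transitive_expn_neq1 (T : {group {perm gT}}) :
  T \subset Hol gT -> transitive_sub T -> exists2 t, t \in T & t ^+ (2 ^ (e - 2))%N != 1.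
Proof.
move=> THol transT; have [z genz] := cyclicP Ncyc.
have oz : #[z] = (2 ^ e)%N by rewrite -Nord -cardsT genz.
have affT y : exists2 p, p \in T & exists m, affine p y m /\ odd m.
  have : y \in orbit 'P T 1 by rewrite (atransP transT) ?inE.
  case/orbitP => p Tp /= <-; exists p; rewrite ?apermE //.
  have [b [m p_aff]] := Hol_affine Ncyc (subsetP THol p Tp).
  by exists m; rewrite (affine1 p_aff) (affine_odd evenN p_aff).
have [t Tt [a [t_aff odd_a]]] := affT (z ^+ 1).
have [a1 | a3] : (a %% 4 = 1 \/ a %% 4 = 3)%N by lia.
  by exists t => //; apply: affine_expn_neq1 t_aff a1 _.
have [s Ts [c [s_aff odd_c]]] := affT (z ^+ 2).
have [c1 | c3] : (c %% 4 = 1 \/ c %% 4 = 3)%N by lia.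
  by exists s => //; apply: affine_expn_neq1 s_aff c1 _.
exists (t * s); first exact: groupM.
have := affine_mul Ncyc t_aff s_aff; rewrite -expgM -expgD => ts_aff.
by apply: affine_expn_neq1 ts_aff _ _; [|nia|lia].
Qed.

Lemma Hol_expn_mem (H : {group {perm gT}}) p :
  3 <= e -> 4 <= #|H :&: HolN gT| -> p \in Hol gT -> p ^+ (2 ^ (e - 2))%N \in H.
Proof.
move=> e_ge3 H4 /(Hol_affine Ncyc)[b [m p_aff]].
have odd_m := affine_odd evenN p_aff.
have m_pow : (m ^ 2 ^ (e - 2) = 1 %[mod #|gT|])%N.
  by rewrite Nord (_ : e = (e - 3).+3) ?odd_expn_pow2_mod //; lia.
rewrite (affine_expn_transl Ncyc p_aff m_pow); apply: transl_mem H4 _.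
have /dvdnP[s ->] := dvdn_geosum_pow2 (e - 2) odd_m; rewrite -expgM.
have -> : (s * 2 ^ (e - 2) * 4 = s * #|gT|)%N.
  by rewrite Nord -{2}(subnK e_ge2) expnD mulnA.
by rewrite mulnC expgM expg_cardT expg1n.
Qed.

End CyclicTwoGroup.

Unset Implicit Arguments.
Set Strict Implicit.

Theorem proposition5p4 (gT : finGroupType) (e : nat) (he : 2 <= e)
  (Ncyc : cyclic [set: gT]) (Nord : #|gT| = (2 ^ e)%N)
  (G H : {group {perm gT}})
  (GHol : G \subset Hol gT) (HG : H \subset G) (idx : #|G : H| = (2 ^ e)%N)
  (HN4 : 4 <= #|H :&: HolN gT|) :
  ~ exists T : {group {perm gT}},
      [/\ T \subset Hol gT, transitive_sub T & G / gcore H G \isog T].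
Proof.
case=> T [THol transT isoGT].
have [t Tt t_neq1] := transitive_expn_neq1 Ncyc Nord he THol transT.
have [e_le2 | e_ge3] := leqP e 2.
  have e2 : e = 2 by lia.
  have sNH : HolN gT \subset H.
    apply/subsetP => _ /imsetP[c _ ->]; apply: (transl_mem Ncyc Nord) HN4 _.
    by rewrite -(expg_cardT c) Nord e2.
  by have := index_dvdn6 (etrans Nord (congr1 _ e2)) sNH HG; rewrite idx e2.
have GnH g : g \in G -> g ^+ (2 ^ (e - 2))%N \in H.
  by move=> Gg; apply: (Hol_expn_mem Ncyc Nord) => //; apply: (subsetP GHol).
have := exponent_quotient_gcore GnH; rewrite (exponent_isog isoGT).
by move/exponentP/(_ t Tt)/eqP; apply/negP.
Qed.
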